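(* Let $M$ be a $4$-dimensional manifold with local coordinates $(x^1,\dots,x^4)$, $e_i=\partial/\partial x^i$, and Riemannian metric $g$ with components \[(g_{ij})=\begin{pmatrix} A&B&C&B\\ B&A&B&C\\ C&B&A&B\\ B&C&B&A\end{pmatrix},\] $A,B,C$ smooth functions with $A>C>B>0$. Let $P$ be the almost product structure with component matrix having rows $(0,0,1,0),(0,0,0,1),(1,0,0,0),(0,1,0,0)$. Then $(M,g,P)$ belongs to the class $\overline{\mathcal{W}}_6$ if and only if \[A_4-C_2=A_2-C_4,\quad B_4=B_2,\quad A_3-C_1=A_1-C_3,\quad B_3=B_1,\] where $A_i=\partial A/\partial x^i$, $B_i=\partial B/\partial x^i$, $C_i=\partial C/\partial x^i$.
   Context: Let $\nabla$ be the Levi-Civita connection of $g$, $F(x,y,z)=g((\nabla_xP)y,z)$, and $\theta(x)=g^{ij}F(e_i,e_j,x)$ with $(g^{ij})$ the inverse of $(g_{ij})$. The manifold $(M,g,P)$ belongs to the class $\overline{\mathcal{W}}_6$ (a basic class of Naveira's classification) if for all vector fields $x,y,z$: \[F(x,y,z)=\tfrac14\Big[\big(g(x,y)-g(x,Py)\big)\theta(z)+\big(g(x,z)-g(x,Pz)\big)\theta(y)\Big],\qquad \theta(Pz)=\theta(z).\] *)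

(* The manifold M is modelled by one
   coordinate chart: an open set U of R^4 (points are row vectors 'rV[R]_4,
   coordinate x^k is the entry of index k-1). *)
From HB Require Import structures.
From mathcomp Require Import all_boot all_order all_algebra.
From mathcomp Require Import all_classical all_reals topology normedtype derive.
Set Implicit Arguments. Unset Strict Implicit. Unset Printing Implicit Defensive.
Import Order.TTheory GRing.Theory Num.Theory.
Import numFieldNormedType.Exports.
Local Open Scope classical_set_scope.
Local Open Scope ring_scope.

Section Coords.
Variable R : realType.
Notation pt := 'rV[R]_4.

Definition ix (k : nat) : 'I_4 := inord k.-1.

Definition e (i : 'I_4) : pt := delta_mx 0 i.

Definition dpart (f : pt -> R) (i : 'I_4) (p : pt) : R := 'D_(e i) f p.

Fixpoint Cn_on (n : nat) (U : set pt) (f : pt -> R) : Prop :=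
  (forall p, U p -> {for p, continuous f}) /\
  match n with
  | 0 => True
  | n'.+1 => forall i : 'I_4,
      (forall p, U p -> derivable f p (e i)) /\ Cn_on n' U (dpart f i)
  end.

Definition smooth_on (U : set pt) (f : pt -> R) : Prop := forall n, Cn_on n U f.

(* A metric G and a (1,1)-tensor P are given by their component matrices
   G p i j = g_ij(p), P p l j = P^l_j(p)  (P e_j = sum_l P^l_j e_l). *)

Definition gform (G : pt -> 'M[R]_4) (p : pt) (u w : pt) : R :=
  \sum_(l < 4) \sum_(k < 4) u 0 l * G p l k * w 0 k.

Definition Papp (P : pt -> 'M[R]_4) (p : pt) (u : pt) : pt :=
  \row_l \sum_(j < 4) P p l j * u 0 j.

(* Christoffel symbols of the first kind: g(nabla_{e_i} e_j, e_k) *)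
Definition Gam1 (G : pt -> 'M[R]_4) (p : pt) (i j k : 'I_4) : R :=
  (dpart (fun q => G q j k) i p + dpart (fun q => G q i k) j p
   - dpart (fun q => G q i j) k p) / 2.

(* Christoffel symbols of the Levi-Civita connection:
   nabla_{e_i} e_j = sum_l Gam G p l i j e_l *)
Definition Gam (G : pt -> 'M[R]_4) (p : pt) (l i j : 'I_4) : R :=
  \sum_(k < 4) (invmx (G p)) l k * Gam1 G p i j k.

(* components (nabla_{e_i} P)^l_j of the covariant derivative of P *)
Definition nablaP (G P : pt -> 'M[R]_4) (p : pt) (i l j : 'I_4) : R :=
  dpart (fun q => P q l j) i p
  + \sum_(k < 4) Gam G p l i k * P p k j
  - \sum_(k < 4) P p l k * Gam G p k i j.

(* F(x,y,z) = g((nabla_x P) y, z) at p *)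
Definition Ften (G P : pt -> 'M[R]_4) (p : pt) (x y z : pt) : R :=
  \sum_(i < 4) \sum_(j < 4) \sum_(l < 4) \sum_(k < 4)
    x 0 i * y 0 j * nablaP G P p i l j * G p l k * z 0 k.

Definition theta (G P : pt -> 'M[R]_4) (p : pt) (x : pt) : R :=
  \sum_(i < 4) \sum_(j < 4) (invmx (G p)) i j * Ften G P p (e i) (e j) x.

(* the class W6-bar (conditions imposed at every point of U, for all
   tangent vectors; F and theta are tensorial) *)
Definition inW6 (U : set pt) (G P : pt -> 'M[R]_4) : Prop :=
  forall p, U p -> forall x y z : pt,
    Ften G P p x y z =
      (1 / 4) * ((gform G p x y - gform G p x (Papp P p y)) * theta G P p z
               + (gform G p x z - gform G p x (Papp P p z)) * theta G P p y)
    /\ theta G P p (Papp P p z) = theta G P p z.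

(* the metric of the statement: diagonal A, entries with i+j odd B,
   the remaining off-diagonal entries (1,3),(2,4) C *)
Definition gmat (A B C : pt -> R) (p : pt) : 'M[R]_4 :=
  \matrix_(i < 4, j < 4)
    (if i == j then A p else if odd (i + j) then B p else C p).

Definition Pmat : 'M[R]_4 :=
  \matrix_(i < 4, j < 4) (if (j : nat) == ((i + 2) %% 4)%N then 1 else 0).

End Coords.

(* P is the permutation matrix of the involution s : j |-> j + 2 (mod 4) of the
   coordinate indices and g is s-invariant, so P is constant and g-orthogonal and
   F_ijk = Gamma_{i,s j,k} - Gamma_{i,j,s k} (Christoffel symbols of the first kind).
   With h_ij = g_ij - g_{i,s j} we have h_{s i,j} = - h_ij, so the W6 identity forces
   F_ijk + F_{s i,j,k} = 0, and F_ijk = 0 whenever h_ij = h_ik = 0; on the triples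
   (2,2,2), (1,1,1), (1,2,2), (2,1,1) this gives the four equations.  Conversely,
   the equations give F_ijk = (h_ik w_j + h_ij w_k) / 2 for an s-invariant w; then
   theta = 2 w, and this is exactly the W6 form of F. *)
From HB Require Import structures.
From mathcomp Require Import all_boot all_order all_algebra.
From mathcomp Require Import all_classical all_reals topology normedtype derive.
From mathcomp Require Import ring lra.
Import Order.TTheory GRing.Theory Num.Theory.
Import numFieldNormedType.Exports.
Local Open Scope classical_set_scope.
Local Open Scope ring_scope.
Set Implicit Arguments. Unset Strict Implicit. Unset Printing Implicit Defensive.

Definition o0 : 'I_4 := @Ordinal 4 0 isT.
Definition o1 : 'I_4 := @Ordinal 4 1 isT.
Definition o2 : 'I_4 := @Ordinal 4 2 isT.
Definition o3 : 'I_4 := @Ordinal 4 3 isT.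

Lemma ord4_cases (i : 'I_4) : i = o0 \/ i = o1 \/ i = o2 \/ i = o3.
Proof.
case: i => [[|[|[|[|i]]]] Hi] //.
- by left; apply: val_inj.
- by right; left; apply: val_inj.
- by right; right; left; apply: val_inj.
- by right; right; right; apply: val_inj.
Qed.

Lemma ix1 : ix 1 = o0. Proof. by apply: val_inj; rewrite /= inordK. Qed.
Lemma ix2 : ix 2 = o1. Proof. by apply: val_inj; rewrite /= inordK. Qed.
Lemma ix3 : ix 3 = o2. Proof. by apply: val_inj; rewrite /= inordK. Qed.
Lemma ix4 : ix 4 = o3. Proof. by apply: val_inj; rewrite /= inordK. Qed.

Definition shift2 (j : 'I_4) : 'I_4 := Ordinal (@ltn_pmod (j + 2) 4 isT).

Lemma shift2_0 : shift2 o0 = o2. Proof. exact: val_inj. Qed.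
Lemma shift2_1 : shift2 o1 = o3. Proof. exact: val_inj. Qed.
Lemma shift2_2 : shift2 o2 = o0. Proof. exact: val_inj. Qed.
Lemma shift2_3 : shift2 o3 = o1. Proof. exact: val_inj. Qed.
Definition shift2E := (shift2_0, shift2_1, shift2_2, shift2_3).

Lemma shift2K : involutive shift2.
Proof. by move=> i; have [->|[->|[->|->]]] := ord4_cases i; rewrite !shift2E. Qed.

Lemma shift2_inj : injective shift2. Proof. exact: inv_inj shift2K. Qed.

Lemma eq_shift2 (i j : 'I_4) : (i == shift2 j) = (shift2 i == j).
Proof. by apply/eqP/eqP => [->|<-]; rewrite shift2K. Qed.

Lemma shift2_neq (j : 'I_4) : (j == shift2 j) = false.
Proof. by have [->|[->|[->|->]]] := ord4_cases j; rewrite !shift2E. Qed.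

Section SumsOverI4.
Variable R : realType.

Lemma sum4 (F : 'I_4 -> R) : \sum_(i < 4) F i = F o0 + F o1 + F o2 + F o3.
Proof.
rewrite !big_ord_recr big_ord0 /= add0r.
by congr (_ + _ + _ + _); congr F; apply: val_inj.
Qed.

Lemma sum_mul_delta (F : 'I_4 -> R) (s : 'I_4) :
  \sum_(k < 4) F k * (k == s)%:R = F s.
Proof.
by rewrite (bigD1 s) //= eqxx mulr1 big1 ?addr0 // => k /negbTE ->; rewrite mulr0.
Qed.

Lemma sum_e_mul (a : 'I_4) (F : 'I_4 -> R) : \sum_(i < 4) e R a 0 i * F i = F a.
Proof.
by rewrite -(sum_mul_delta F a); apply: eq_bigr => i _; rewrite /e mxE eqxx mulrC.
Qed.

Lemma PmatE (l j : 'I_4) : Pmat R l j = (l == shift2 j)%:R.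
Proof.
rewrite mxE.
by have [->|[->|[->|->]]] := ord4_cases l; have [->|[->|[->|->]]] := ord4_cases j.
Qed.

Lemma sum_mul_Pmat (F : 'I_4 -> R) j : \sum_(k < 4) F k * Pmat R k j = F (shift2 j).
Proof. by rewrite -sum_mul_delta; apply: eq_bigr => k _; rewrite PmatE. Qed.

Lemma sum_Pmat_mul (F : 'I_4 -> R) l : \sum_(k < 4) Pmat R l k * F k = F (shift2 l).
Proof.
rewrite -sum_mul_delta; apply: eq_bigr => k _.
by rewrite PmatE mulrC eq_shift2 eq_sym.
Qed.

Lemma Papp_Pmat (p u : 'rV[R]_4) :
  Papp (fun _ => Pmat R) p u = \row_l u 0 (shift2 l).
Proof. by apply/rowP => l; rewrite !mxE sum_Pmat_mul. Qed.

Lemma Papp_Pmat_e (p : 'rV[R]_4) b : Papp (fun _ => Pmat R) p (e R b) = e R (shift2 b).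
Proof.
apply/rowP => l; rewrite Papp_Pmat /e !mxE.
by rewrite -eq_shift2.
Qed.

End SumsOverI4.

Section Components.
Variable R : realType.
Variables G P : 'rV[R]_4 -> 'M[R]_4.
Variable p : 'rV[R]_4.

Definition Fcomp (i j k : 'I_4) : R := \sum_(l < 4) nablaP G P p i l j * G p l k.

Lemma Ften_sum x y z : Ften G P p x y z =
  \sum_(i < 4) x 0 i * \sum_(j < 4) y 0 j * \sum_(k < 4) z 0 k * Fcomp i j k.
Proof.
apply: eq_bigr => i _; rewrite mulr_sumr; apply: eq_bigr => j _.
rewrite exchange_big /= !mulr_sumr; apply: eq_bigr => k _.
by rewrite /Fcomp !mulr_sumr; apply: eq_bigr => l _; ring.
Qed.

Lemma Ften_e a b c : Ften G P p (e R a) (e R b) (e R c) = Fcomp a b c.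
Proof. by rewrite Ften_sum !sum_e_mul. Qed.

Lemma theta_sum z : theta G P p z =
  \sum_(k < 4) z 0 k * \sum_(i < 4) \sum_(j < 4) invmx (G p) i j * Fcomp i j k.
Proof.
rewrite /theta.
under eq_bigr => i _ do under eq_bigr => j _ do rewrite Ften_sum !sum_e_mul mulr_sumr.
under eq_bigr => i _ do rewrite exchange_big /=.
rewrite exchange_big /=; apply: eq_bigr => k _.
rewrite mulr_sumr; apply: eq_bigr => i _; rewrite mulr_sumr; apply: eq_bigr => j _.
ring.
Qed.

Lemma gform_e a b : gform G p (e R a) (e R b) = G p a b.
Proof.
rewrite /gform; under eq_bigr => l _ do under eq_bigr => k _ do rewrite -mulrA.
under eq_bigr => l _ do rewrite -mulr_sumr.
by rewrite sum_e_mul; under eq_bigr => k _ do rewrite mulrC; rewrite sum_e_mul.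
Qed.

Definition W6_at : Prop :=
  forall x y z : 'rV[R]_4,
    Ften G P p x y z =
      (1 / 4) * ((gform G p x y - gform G p x (Papp P p y)) * theta G P p z
               + (gform G p x z - gform G p x (Papp P p z)) * theta G P p y)
    /\ theta G P p (Papp P p z) = theta G P p z.

End Components.

Section InvariantMetric.
Variable R : realType.
Variable G : 'rV[R]_4 -> 'M[R]_4.
Variable p : 'rV[R]_4.
Hypothesis G_unit : G p \in unitmx.
Hypothesis G_sym : forall i j, G p i j = G p j i.
Hypothesis G_shift2 : forall i j, G p (shift2 i) (shift2 j) = G p i j.

Local Notation P := (fun _ : 'rV[R]_4 => Pmat R).
Local Notation F := (Fcomp G P p).

Lemma invmx_sym i j : invmx (G p) i j = invmx (G p) j i.
Proof.
have GT : (G p)^T = G p by apply/matrixP => a b; rewrite mxE G_sym.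
by have := congr1 (fun M : 'M_4 => M j i) (trmx_inv (G p)); rewrite GT mxE.
Qed.

Lemma sum_invmx_mul m k : \sum_(l < 4) invmx (G p) l m * G p l k = (m == k)%:R.
Proof.
have := congr1 (fun M : 'M_4 => M m k) (mulVmx G_unit); rewrite !mxE => <-.
by apply: eq_bigr => l _; rewrite invmx_sym.
Qed.

Lemma sum_Gam_mul i j k : \sum_(l < 4) Gam G p l i j * G p l k = Gam1 G p i j k.
Proof.
under eq_bigr => l _ do rewrite /Gam mulr_suml.
rewrite exchange_big /=.
under eq_bigr => m _ do (under eq_bigr => l _ do rewrite mulrAC; rewrite -mulr_suml).
by under eq_bigr => m _ do rewrite sum_invmx_mul mulrC; rewrite sum_mul_delta.
Qed.

Lemma dpart_cst (c : R) i : dpart (fun _ => c) i p = 0.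
Proof. exact: derive_cst. Qed.

Lemma Fcomp_Pmat i j k : F i j k = Gam1 G p i (shift2 j) k - Gam1 G p i j (shift2 k).
Proof.
rewrite /Fcomp /nablaP.
under eq_bigr => l _ do rewrite dpart_cst add0r sum_mul_Pmat sum_Pmat_mul mulrBl.
rewrite sumrB sum_Gam_mul; congr (_ - _).
rewrite (reindex_inj shift2_inj) /= -sum_Gam_mul; apply: eq_bigr => l _.
by rewrite shift2K -G_shift2 shift2K.
Qed.

Definition gdiffP i j := G p i j - G p i (shift2 j).

Lemma gdiffP_shift2l i j : gdiffP (shift2 i) j = - gdiffP i j.
Proof. by rewrite /gdiffP G_shift2 -{1}[j]shift2K G_shift2 opprB. Qed.

Section Necessity.
Hypothesis W6 : W6_at G P p.

Lemma Fcomp_W6 i j k :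
  F i j k = 1 / 4 * (gdiffP i j * theta G P p (e R k) + gdiffP i k * theta G P p (e R j)).
Proof. by rewrite -Ften_e (W6 _ _ _).1 !Papp_Pmat_e !gform_e. Qed.

Lemma Fcomp_add_shift2l i j k : F i j k + F (shift2 i) j k = 0.
Proof. by rewrite !Fcomp_W6 !gdiffP_shift2l; ring. Qed.

Lemma Fcomp_eq0 i j k : gdiffP i j = 0 -> gdiffP i k = 0 -> F i j k = 0.
Proof. by move=> hj hk; rewrite Fcomp_W6 hj hk !mul0r addr0 mulr0. Qed.

End Necessity.

Section Sufficiency.
Variable w : 'I_4 -> R.
Hypothesis w_shift2 : forall j, w (shift2 j) = w j.
Hypothesis Fcomp_w : forall i j k, F i j k = 1 / 2 * (gdiffP i k * w j + gdiffP i j * w k).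

Lemma sum_invmx_gdiffP j k :
  \sum_(i < 4) invmx (G p) i j * gdiffP i k = (j == k)%:R - (j == shift2 k)%:R.
Proof. by under eq_bigr => i _ do rewrite mulrBr; rewrite sumrB !sum_invmx_mul. Qed.

Lemma theta_w z : theta G P p z = \sum_(k < 4) z 0 k * (2 * w k).
Proof.
rewrite theta_sum; apply: eq_bigr => k _; congr (_ * _).
have split_term i j : invmx (G p) i j * F i j k =
    1 / 2 * (w j * (invmx (G p) i j * gdiffP i k))
  + 1 / 2 * (w k * (invmx (G p) i j * gdiffP i j)).
  by rewrite Fcomp_w; ring.
under eq_bigr => i _ do under eq_bigr => j _ do rewrite split_term.
rewrite exchange_big /=.
under eq_bigr => j _ do rewrite big_split /= -!mulr_sumr !sum_invmx_gdiffP eqxx shift2_neq.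
rewrite big_split /= -mulr_sumr sumr_const card_ord.
under eq_bigr => j _ do rewrite mulrBr.
rewrite sumrB !sum_mul_delta w_shift2.
by rewrite subrr mulr0 add0r subr0 mulr1; field.
Qed.

Lemma gform_subPapp x y :
  gform G p x y - gform G p x (Papp P p y) =
  \sum_(i < 4) \sum_(k < 4) x 0 i * gdiffP i k * y 0 k.
Proof.
rewrite /gform -sumrB; apply: eq_bigr => i _.
rewrite [X in _ - X](reindex_inj shift2_inj) /= -sumrB; apply: eq_bigr => k _.
by rewrite Papp_Pmat mxE shift2K /gdiffP; ring.
Qed.

Lemma W6_at_w : W6_at G P p.
Proof.
move=> x y z; split.
- rewrite Ften_sum !theta_w !gform_subPapp.
  under eq_bigr => i _ do under eq_bigr => j _ do under eq_bigr => k _ do rewrite Fcomp_w.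
  by rewrite !sum4; field.
- rewrite !theta_w Papp_Pmat (reindex_inj shift2_inj) /=.
  by apply: eq_bigr => k _; rewrite mxE shift2K w_shift2.
Qed.

End Sufficiency.

End InvariantMetric.

Section ExampleMetric.
Variable R : realType.

Definition gentry (j k : 'I_4) (a b c : R) :=
  if j == k then a else if odd (j + k) then b else c.

Lemma gentry_sym j k a b c : gentry j k a b c = gentry k j a b c.
Proof. by rewrite /gentry eq_sym addnC. Qed.

Lemma gentry_shift2 j k a b c : gentry (shift2 j) (shift2 k) a b c = gentry j k a b c.
Proof.
by have [->|[->|[->|->]]] := ord4_cases j; have [->|[->|[->|->]]] := ord4_cases k;
  rewrite !shift2E.
Qed.

(* The inverse has the same shape; its entries come from the eigenvalues
   a + c + 2b, a + c - 2b and a - c (double). *)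
Lemma gentry_unit (a b c : R) : 0 < b -> b < c -> c < a ->
  (\matrix_(i, j) gentry i j a b c) \in unitmx.
Proof.
move=> b_gt0 lt_bc lt_ca.
set D := (a + c) ^+ 2 - 4 * b ^+ 2.
have D_neq0 : D != 0.
  have -> : D = (a + c - 2 * b) * (a + c + 2 * b) by rewrite /D; ring.
  by rewrite lt0r_neq0 // mulr_gt0 //; lra.
have ac_neq0 : a - c != 0 by rewrite lt0r_neq0 // subr_gt0.
pose a' := (a + c) / (2 * D) + 1 / (2 * (a - c)).
pose c' := (a + c) / (2 * D) - 1 / (2 * (a - c)).
pose b' := - b / D.
suff inv : (\matrix_(i, j) gentry i j a b c) *m (\matrix_(i, j) gentry i j a' b' c') = 1%:M.
  by case: (mulmx1_unit inv).
apply/matrixP => i k; rewrite !mxE sum4 !mxE.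
have [->|[->|[->|->]]] := ord4_cases i; have [->|[->|[->|->]]] := ord4_cases k;
  rewrite /gentry /= /a' /b' /c' /D; field; by rewrite ?D_neq0 ?ac_neq0.
Qed.

Definition Gam1_abc (dA dB dC : 'I_4 -> R) (i j k : 'I_4) : R :=
  (gentry j k (dA i) (dB i) (dC i) + gentry i k (dA j) (dB j) (dC j)
   - gentry i j (dA k) (dB k) (dC k)) / 2.

Definition F_abc dA dB dC i j k :=
  Gam1_abc dA dB dC i (shift2 j) k - Gam1_abc dA dB dC i j (shift2 k).

Definition W6_eqs (dA dB dC : 'I_4 -> R) : Prop :=
  dA o3 - dC o1 = dA o1 - dC o3 /\ dB o3 = dB o1 /\
  dA o2 - dC o0 = dA o0 - dC o2 /\ dB o2 = dB o0.

Section Derivatives.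
Variables dA dB dC : 'I_4 -> R.
Local Notation F := (F_abc dA dB dC).

Lemma F_abc_add_shift2_11 : F o1 o1 o1 + F o3 o1 o1 = (dA o3 - dC o1) - (dA o1 - dC o3).
Proof. by rewrite /F_abc /Gam1_abc !shift2E /gentry /=; field. Qed.

Lemma F_abc_add_shift2_00 : F o0 o0 o0 + F o2 o0 o0 = (dA o2 - dC o0) - (dA o0 - dC o2).
Proof. by rewrite /F_abc /Gam1_abc !shift2E /gentry /=; field. Qed.

Lemma F_abc_011 : F o0 o1 o1 = dB o3 - dB o1.
Proof. by rewrite /F_abc /Gam1_abc !shift2E /gentry /=; field. Qed.

Lemma F_abc_100 : F o1 o0 o0 = dB o2 - dB o0.
Proof. by rewrite /F_abc /Gam1_abc !shift2E /gentry /=; field. Qed.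

(* theta(e_j) / 2, cf. [theta_w] *)
Definition lee_abc (a c : R) (j : 'I_4) :=
  (dA j - dC j + dA (shift2 j) - dC (shift2 j)) / (2 * (a - c)).

Lemma lee_abc_shift2 a c j : lee_abc a c (shift2 j) = lee_abc a c j.
Proof. by rewrite /lee_abc shift2K; congr (_ / _); ring. Qed.

Lemma F_abc_W6_eqs (a b c : R) : a - c != 0 -> W6_eqs dA dB dC ->
  forall i j k, F i j k =
   1 / 2 * ((gentry i k a b c - gentry i (shift2 k) a b c) * lee_abc a c j
          + (gentry i j a b c - gentry i (shift2 j) a b c) * lee_abc a c k).
Proof.
move=> ac_neq0 [eq1 [eq2 [eq3 eq4]]].
have eA3 : dA o3 = dA o1 - dC o3 + dC o1 by rewrite -eq1 subrK.
have eA2 : dA o2 = dA o0 - dC o2 + dC o0 by rewrite -eq3 subrK.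
move=> i j k.
have [->|[->|[->|->]]] := ord4_cases i; have [->|[->|[->|->]]] := ord4_cases j;
  have [->|[->|[->|->]]] := ord4_cases k;
  rewrite /F_abc /Gam1_abc /lee_abc !shift2E /gentry /= ?eA3 ?eA2 ?eq2 ?eq4;
  field; by rewrite ?ac_neq0.
Qed.

End Derivatives.
End ExampleMetric.

Section CoordinateMetric.
Variable R : realType.
Variables A B C : 'rV[R]_4 -> R.
Variable p : 'rV[R]_4.
Hypotheses (B_gt0 : 0 < B p) (lt_BC : B p < C p) (lt_CA : C p < A p).

Local Notation G := (gmat A B C).
Local Notation P := (fun _ : 'rV[R]_4 => Pmat R).
Local Notation dA := (fun i => dpart A i p).
Local Notation dB := (fun i => dpart B i p).
Local Notation dC := (fun i => dpart C i p).

Lemma gmatE j k : G p j k = gentry j k (A p) (B p) (C p).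
Proof. by rewrite mxE. Qed.

Lemma gmat_unit : G p \in unitmx.
Proof.
have -> : G p = \matrix_(i, j) gentry i j (A p) (B p) (C p) by apply/matrixP => i j; rewrite !mxE.
exact: gentry_unit.
Qed.

Lemma gmat_sym i j : G p i j = G p j i.
Proof. by rewrite !gmatE gentry_sym. Qed.

Lemma gmat_shift2 i j : G p (shift2 i) (shift2 j) = G p i j.
Proof. by rewrite !gmatE gentry_shift2. Qed.

Lemma dpart_gmat i j k : dpart (fun q => G q j k) i p = gentry j k (dA i) (dB i) (dC i).
Proof.
have -> : (fun q => G q j k) = if j == k then A else if odd (j + k) then B else C.
  by apply: funext => q; rewrite mxE; case: ifP => _ //; case: ifP.
by rewrite /gentry; case: ifP => _ //; case: ifP.
Qed.

Lemma Fcomp_gmat i j k : Fcomp G P p i j k = F_abc dA dB dC i j k.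
Proof. by rewrite (Fcomp_Pmat gmat_unit gmat_sym gmat_shift2) /Gam1 !dpart_gmat. Qed.

Lemma W6_eqs_of_W6 : W6_at G P p -> W6_eqs dA dB dC.
Proof.
move=> W6.
have F_add_shift2 := Fcomp_add_shift2l gmat_shift2 W6.
have gdiffP_01 : gdiffP G p o0 o1 = 0 by rewrite /gdiffP !gmatE shift2E subrr.
have gdiffP_10 : gdiffP G p o1 o0 = 0 by rewrite /gdiffP !gmatE shift2E subrr.
split; [|split; [|split]]; apply/eqP; rewrite -subr_eq0; apply/eqP.
- by have := F_add_shift2 o1 o1 o1; rewrite shift2E !Fcomp_gmat F_abc_add_shift2_11.
- by have := Fcomp_eq0 W6 gdiffP_01 gdiffP_01; rewrite Fcomp_gmat F_abc_011.
- by have := F_add_shift2 o0 o0 o0; rewrite shift2E !Fcomp_gmat F_abc_add_shift2_00.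
- by have := Fcomp_eq0 W6 gdiffP_10 gdiffP_10; rewrite Fcomp_gmat F_abc_100.
Qed.

Lemma W6_of_W6_eqs : W6_eqs dA dB dC -> W6_at G P p.
Proof.
move=> eqs.
have ac_neq0 : A p - C p != 0 by rewrite lt0r_neq0 // subr_gt0.
apply: (W6_at_w gmat_unit gmat_sym (lee_abc_shift2 dA dC (A p) (C p))).
by move=> i j k; rewrite Fcomp_gmat (F_abc_W6_eqs (B p) ac_neq0 eqs) /gdiffP !gmatE.
Qed.

End CoordinateMetric.

Theorem corollary3p7 (R : realType) (U : set 'rV[R]_4) (A B C : 'rV[R]_4 -> R) :
  open U ->
  smooth_on U A -> smooth_on U B -> smooth_on U C ->
  (forall p, U p -> 0 < B p /\ B p < C p /\ C p < A p) ->
  inW6 U (gmat A B C) (fun _ => Pmat R) <->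
  (forall p, U p ->
     dpart A (ix 4) p - dpart C (ix 2) p = dpart A (ix 2) p - dpart C (ix 4) p /\
     dpart B (ix 4) p = dpart B (ix 2) p /\
     dpart A (ix 3) p - dpart C (ix 1) p = dpart A (ix 1) p - dpart C (ix 3) p /\
     dpart B (ix 3) p = dpart B (ix 1) p).
Proof.
move=> _ _ _ _ ordered; rewrite ix1 ix2 ix3 ix4.
split=> [W6 p Up | eqs p Up]; have [B_gt0 [lt_BC lt_CA]] := ordered p Up.
- exact: (W6_eqs_of_W6 B_gt0 lt_BC lt_CA (W6 p Up)).
- exact: (W6_of_W6_eqs B_gt0 lt_BC lt_CA (eqs p Up)).
Qed.
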